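(* Let $M$ be an ordinal monoid with merge. For every $a\in M$ there exists an FO-approximant of $\pi$ over $a^{\mathrm{ord}}$, the set of all countable ordinal words (including the empty word) all of whose letters are $a$.
   Context: Countable ordinal words over $\Sigma$: maps $w\colon\alpha\to\Sigma$, $\alpha$ a countable ordinal; $\Sigma^{\mathrm{ord}}$ their set. An ordinal monoid: set $M$ with $\pi\colon M^{\mathrm{ord}}\to M$, $\pi(x)=x$ on one-letter words, generalised associativity; $1=\pi(\varepsilon)$, $x\cdot y=\pi(xy)$, $x^\omega=\pi(xxx\cdots)$; ordered by $\le$ if $u\le v$ letterwise implies $\pi(u)\le\pi(v)$. $x^!$ idempotent power, $x^{!+k}$ eventual value of $x^{n!+k}$ in a finite semigroup. Ordinal monoid with merge: $(M,1,\le,\cdot,-^\omega,-^\sharp)$, $M$ finite, $(M,1,\le,\cdot,-^\omega)$ the presentation of an ordered finite ordinal monoid, $-^\sharp$ monotone with $a^{!+k}\le a^\sharp$, $(a^!)^\sharp=a^!$, $a^\sharp a^\sharp=(a^\sharp)^\sharp=a^\sharp$, $(ab)^\sharp=a(ba)^\sharp b$. FO logic over alphabet $M$ (atoms $x<y$, $a(x)$); FO-definable languages and maps (preimages FO-definable). For FO-definable $L\subseteq M^{\mathrm{ord}}$, an FO-approximant of $\pi$ over $L$ is an FO-definable $\rho\colon L\to M$ with $\pi(u)\le\rho(u)$ for all $u\in L$. *)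

From mathcomp Require Import all_boot.
Set Implicit Arguments. Unset Strict Implicit. Unset Printing Implicit Defensive.

(** It is a countable ordinal word when the relation strictly well-orders D.
   Every countable ordinal is the order type of such a (D, <). *)
Record rword (S : Type) := RWord {
  wdom : nat -> Prop;
  word : nat -> nat -> Prop;
  wlab : nat -> S }.

Definition is_word S (u : rword S) : Prop :=
  [/\ (forall i, wdom u i -> ~ word u i i),
      (forall i j k, wdom u i -> wdom u j -> wdom u k ->
          word u i j -> word u j k -> word u i k),
      (forall i j, wdom u i -> wdom u j -> i = j \/ word u i j \/ word u j i)
    & (forall P : nat -> Prop, (forall i, P i -> wdom u i) -> (exists i, P i) ->
          exists i, P i /\ forall j, P j -> ~ word u j i)].

(** Isomorphism of labelled linear orders (words are taken up to it). *)
Definition word_iso S (u v : rword S) : Prop :=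
  exists f : nat -> nat,
    [/\ (forall i, wdom u i -> wdom v (f i)),
        (forall j, wdom v j -> exists2 i, wdom u i & f i = j),
        (forall i j, wdom u i -> wdom u j -> (word u i j <-> word v (f i) (f j)))
      & (forall i, wdom u i -> wlab u i = wlab v (f i))].

Definition restrict S (u : rword S) (P : nat -> Prop) : rword S :=
  RWord (fun i => wdom u i /\ P i) (word u) (wlab u).

Definition ordinal_monoid (M : Type) (pi : rword M -> M) : Prop :=
  [/\ (* pi is a function on abstract words *)
      (forall u v, is_word u -> is_word v -> word_iso u v -> pi u = pi v),
      (forall u i, is_word u -> wdom u i -> (forall j, wdom u j -> j = i) ->
          pi u = wlab u i)
    & (* generalised associativity: pi(prod_{j in E} u_j) = pi(prod_{j in E} pi(u_j)),
         the factor u_j being the fibre of a monotone map f from u to the ordinal (E,R) *)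
      (forall (u : rword M) (E : nat -> Prop) (R : nat -> nat -> Prop) (f : nat -> nat),
          is_word u -> is_word (RWord E R (fun _ => tt)) ->
          (forall i, wdom u i -> E (f i)) ->
          (forall i j, wdom u i -> wdom u j -> word u i j -> R (f i) (f j) \/ f i = f j) ->
          pi u = pi (RWord E R (fun j => pi (restrict u (fun i => f i = j)))))].

Definition ordered_om (M : Type) (pi : rword M -> M) (le : M -> M -> bool) : Prop :=
  [/\ (forall x, le x x),
      (forall x y z, le x y -> le y z -> le x z),
      (forall x y, le x y -> le y x -> x = y)
    & (forall u v : rword M, is_word u -> wdom u = wdom v -> word u = word v ->
          (forall i, wdom u i -> le (wlab u i) (wlab v i)) -> le (pi u) (pi v))].

Definition om_one (M : Type) (pi : rword M -> M) (x0 : M) : M :=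
  pi (RWord (fun _ => False) (fun i j => i < j) (fun _ => x0)).

Definition om_mul (M : Type) (pi : rword M -> M) (x y : M) : M :=
  pi (RWord (fun i => i < 2) (fun i j => i < j) (fun i => if i == 0 then x else y)).

Definition om_omega (M : Type) (pi : rword M -> M) (x : M) : M :=
  pi (RWord (fun _ => True) (fun i j => i < j) (fun _ => x)).

Fixpoint om_pow (M : Type) (pi : rword M -> M) (x : M) (n : nat) : M :=
  match n with
  | 0 => om_one pi x
  | n'.+1 => om_mul pi x (om_pow pi x n')
  end.

(** x^{!+k}: eventual value of x^{n!+k}; in a finite semigroup of size |M| it is x^{|M|!+k}. *)
Definition om_bang_plus (M : finType) (pi : rword M -> M) (x : M) (k : nat) : M :=
  om_pow pi x (#|M|`! + k).

(** x^!: the idempotent power of x. *)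
Definition om_bang (M : finType) (pi : rword M -> M) (x : M) : M :=
  om_bang_plus pi x 0.

Definition merge_axioms (M : finType) (pi : rword M -> M) (le : M -> M -> bool)
    (sharp : M -> M) : Prop :=
  [/\ (forall a b, le a b -> le (sharp a) (sharp b)),
      (forall a k, le (om_bang_plus pi a k) (sharp a)),
      (forall a, sharp (om_bang pi a) = om_bang pi a),
      (forall a, om_mul pi (sharp a) (sharp a) = sharp a /\ sharp (sharp a) = sharp a)
    & (forall a b, sharp (om_mul pi a b) = om_mul pi a (om_mul pi (sharp (om_mul pi b a)) b))].

Inductive fo (S : Type) :=
| FLt of nat & nat
| FEq of nat & nat
| FLab of S & nat
| FFalse
| FNot of fo S
| FAnd of fo S & fo S
| FEx of nat & fo S.

Arguments FFalse {S}.

Fixpoint fo_sat S (u : rword S) (nu : nat -> nat) (phi : fo S) : Prop :=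
  match phi with
  | FLt x y => word u (nu x) (nu y)
  | FEq x y => nu x = nu y
  | FLab a x => wlab u (nu x) = a
  | FFalse => False
  | FNot p => ~ fo_sat u nu p
  | FAnd p q => fo_sat u nu p /\ fo_sat u nu q
  | FEx x p => exists i, wdom u i /\ fo_sat u (fun y => if y == x then i else nu y) p
  end.

Fixpoint fo_free S (z : nat) (phi : fo S) : bool :=
  match phi with
  | FLt x y => (z == x) || (z == y)
  | FEq x y => (z == x) || (z == y)
  | FLab _ x => z == x
  | FFalse => false
  | FNot p => fo_free z p
  | FAnd p q => fo_free z p || fo_free z q
  | FEx x p => (z != x) && fo_free z p
  end.

Definition fo_sentence S (phi : fo S) : Prop := forall z, ~~ fo_free z phi.

Definition fo_definable S (L : rword S -> Prop) : Prop :=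
  exists phi : fo S, fo_sentence phi /\
    forall u, is_word u -> (L u <-> fo_sat u (fun _ => 0) phi).

Definition a_ord (M : Type) (a : M) (u : rword M) : Prop :=
  is_word u /\ forall i, wdom u i -> wlab u i = a.

Definition fo_approximant (M : Type) (pi : rword M -> M) (le : M -> M -> bool)
    (L : rword M -> Prop) (rho : rword M -> M) : Prop :=
  [/\ fo_definable L,
      (forall m : M, fo_definable (fun u => L u /\ rho u = m))
    & (forall u, L u -> le (pi u) (rho u))].

From Stdlib Require Import Classical ClassicalEpsilon.
From mathcomp Require Import all_boot zify.
Set Implicit Arguments. Unset Strict Implicit. Unset Printing Implicit Defensive.

(* A word of a^ord is a countable ordinal alpha. Its limit positions (together with the first
   position) cut it into blocks: every block has order type omega, except a final finite block
   of some size c+1 when alpha has a last position. By generalised associativity,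
   pi(a^alpha) = pi((a^omega)^beta) * a^(c+1), where beta is the ordinal of the starts of the
   omega-blocks. Iterating this |M| times replaces a by z = a^(omega^|M|), which satisfies
   z^omega = z; for such z every nonempty word of z's evaluates to z. Replacing a^(c+1) by the
   merge a^sharp when c >= |M|! gives an upper bound rho (as a^(!+k) <= a^sharp). Its value is
   determined by the truth of finitely many first-order sentences (nonemptiness, existence of a
   last position, size of the last block below |M|!, recursively relativised to the block
   starts), and a property determined by finitely many sentences is FO-definable. *)

Definition classicb (P : Prop) : bool :=
  if excluded_middle_informative P then true else false.

Lemma classicbP P : reflect P (classicb P).
Proof. by rewrite /classicb; case: excluded_middle_informative => h; constructor. Qed.

Lemma classicb_ext P Q : (P <-> Q) -> classicb P = classicb Q.
Proof.
move=> PQ; rewrite /classicb.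
by case: excluded_middle_informative => p; case: excluded_middle_informative => q //;
  [case: q; apply/PQ | case: p; apply/PQ].
Qed.

Definition wle S (u : rword S) i j := word u i j \/ i = j.

Lemma wle_refl S (u : rword S) i : wle u i i.
Proof. by right. Qed.

Section WordOrder.
Variables (S : Type) (u : rword S).
Hypothesis wu : is_word u.

Lemma word_irr i : wdom u i -> ~ word u i i.
Proof. by case: wu => H _ _ _; apply: H. Qed.

Lemma word_trans i j k : wdom u i -> wdom u j -> wdom u k ->
  word u i j -> word u j k -> word u i k.
Proof. by case: wu => _ H _ _; apply: H. Qed.

Lemma word_total i j : wdom u i -> wdom u j -> i = j \/ word u i j \/ word u j i.
Proof. by case: wu => _ _ H _; apply: H. Qed.

Lemma word_wf (P : nat -> Prop) : (forall i, P i -> wdom u i) -> (exists i, P i) ->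
  exists i, P i /\ forall j, P j -> ~ word u j i.
Proof. by case: wu => _ _ _ H; apply: H. Qed.

Lemma word_wleF i j : wdom u i -> wdom u j -> word u i j -> ~ wle u j i.
Proof.
move=> di dj ij [ji|e]; last by subst; exact: word_irr ij.
by apply: (word_irr di); apply: word_trans ij ji.
Qed.

Lemma word_asym i j : wdom u i -> wdom u j -> word u i j -> ~ word u j i.
Proof. by move=> di dj ij ji; apply: (word_wleF di dj ij); left. Qed.

Lemma wle_of_Nword i j : wdom u i -> wdom u j -> ~ word u i j -> wle u j i.
Proof. by move=> di dj nij; case: (word_total di dj) => [->|[//|]]; [right|left]. Qed.

Lemma word_of_Nwle i j : wdom u i -> wdom u j -> ~ wle u i j -> word u j i.
Proof. by move=> di dj nij; case: (word_total di dj) => [e|[ij|//]]; case: nij; [right|left]. Qed.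

Lemma wle_word_trans i j k : wdom u i -> wdom u j -> wdom u k ->
  wle u i j -> word u j k -> word u i k.
Proof. by move=> di dj dk [ij|->] jk //; apply: word_trans ij jk. Qed.

Lemma word_wle_trans i j k : wdom u i -> wdom u j -> wdom u k ->
  word u i j -> wle u j k -> word u i k.
Proof. by move=> di dj dk ij [jk|<-] //; apply: word_trans ij jk. Qed.

Lemma wle_trans i j k : wdom u i -> wdom u j -> wdom u k ->
  wle u i j -> wle u j k -> wle u i k.
Proof. by move=> di dj dk [ij|->] // jk; left; apply: word_wle_trans ij jk. Qed.

Lemma wle_anti i j : wdom u i -> wdom u j -> wle u i j -> wle u j i -> i = j.
Proof. by move=> di dj [ij|//] ji; case: (word_wleF di dj ij ji). Qed.

Lemma word_ind (P : nat -> Prop) :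
  (forall i, wdom u i -> (forall j, wdom u j -> word u j i -> P j) -> P i) ->
  forall i, wdom u i -> P i.
Proof.
move=> H i di; apply: NNPP => nPi.
have [x [[dx nPx] Hx]] := word_wf (P := fun i => wdom u i /\ ~ P i)
  (fun i h => proj1 h) (ex_intro _ i (conj di nPi)).
apply: nPx; apply: H => // j dj ji; apply: NNPP => nPj.
exact: (Hx j (conj dj nPj) ji).
Qed.
End WordOrder.

Lemma is_word_sub S T (u : rword S) (E : nat -> Prop) (l : nat -> T) :
  is_word u -> (forall i, E i -> wdom u i) -> is_word (RWord E (word u) l).
Proof.
case=> H1 H2 H3 H4 hE; split=> /=.
- by move=> i /hE /H1.
- by move=> i j k /hE ? /hE ? /hE ?; apply: H2.
- by move=> i j /hE ? /hE ?; apply: H3.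
- by move=> P HP; apply: H4 => i /HP /hE.
Qed.

Lemma is_word_restrict S (u : rword S) P : is_word u -> is_word (restrict u P).
Proof. by move=> wu; apply: is_word_sub wu _ => i []. Qed.

Definition const_word S T (u : rword S) (b : T) := RWord (wdom u) (word u) (fun _ => b).

Lemma is_word_const S T (u : rword S) (b : T) : is_word u -> is_word (const_word u b).
Proof. by move=> wu; apply: is_word_sub wu _. Qed.

Lemma is_word_ltn S (D : nat -> Prop) (l : nat -> S) : is_word (RWord D (fun i j => i < j) l).
Proof.
split=> /=.
- by move=> i _; rewrite ltnn.
- by move=> i j k _ _ _; apply: ltn_trans.
- by move=> i j _ _; case: (ltngtP i j) => h; auto.
- move=> Q _ ex.
  have ex' : exists n, classicb (Q n) by case: ex => i Qi; exists i; apply/classicbP.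
  exists (ex_minn ex'); case: ex_minnP => m /classicbP Qm Hm; split=> // j Qj.
  by rewrite ltnNge Hm //; apply/classicbP.
Qed.

Ltac solve_is_word := solve [repeat first
  [ assumption | apply: is_word_restrict | exact: is_word_ltn | apply: is_word_const ]].

Section OrdinalMonoid.
Variables (M : Type) (pi : rword M -> M).
Hypothesis Hom : ordinal_monoid pi.

Lemma pi_ext (u v : rword M) : is_word u -> is_word v ->
  (forall i, wdom u i <-> wdom v i) ->
  (forall i j, wdom u i -> wdom u j -> (word u i j <-> word v i j)) ->
  (forall i, wdom u i -> wlab u i = wlab v i) -> pi u = pi v.
Proof.
case: Hom => Hiso _ _ wu wv Hd Hw Hl; apply: Hiso => //.
exists id; split=> //.
- by move=> i /Hd.
- by move=> j /Hd dj; exists j.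
Qed.

Lemma pi_eq_dom (u v : rword M) : is_word u -> is_word v ->
  (forall i, wdom u i <-> wdom v i) -> word u = word v -> wlab u = wlab v -> pi u = pi v.
Proof.
by move=> wu wv hd hw hl; apply: pi_ext => // [i j _ _|i _]; rewrite ?hw ?hl.
Qed.

Lemma pi_empty (u : rword M) x0 : is_word u -> (forall i, ~ wdom u i) -> pi u = om_one pi x0.
Proof.
move=> wu he; apply: pi_ext => //; first exact: is_word_ltn.
- by move=> i; split=> // /he.
- by move=> i j /he.
- by move=> i /he.
Qed.

Lemma pi_single (u : rword M) i : is_word u -> wdom u i -> (forall j, wdom u j -> j = i) ->
  pi u = wlab u i.
Proof. by case: Hom => _ H _; apply: H. Qed.

Lemma pi_split (u : rword M) (Q : nat -> Prop) : is_word u ->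
  (forall i j, wdom u i -> wdom u j -> word u i j -> Q i -> Q j) ->
  pi u = om_mul pi (pi (restrict u (fun i => ~ Q i))) (pi (restrict u Q)).
Proof.
move=> wu HQ; case: (Hom) => _ _ Has.
pose f i := if classicb (Q i) then 1 else 0.
rewrite (Has u (fun i => i < 2) (fun i j => i < j) f wu (is_word_ltn _ _)).
- apply: pi_ext; try exact: is_word_ltn; try done.
  move=> [|[|i]] //= _; apply: pi_ext => //; try solve_is_word;
    by move=> i; rewrite /f /=; case: classicbP => q; split=> -[].
- by move=> i _; rewrite /f; case: classicb.
- move=> i j di dj lij; rewrite /f; case: classicbP => qi; case: classicbP => qj; auto.
  by case: qj; apply: HQ qi.
Qed.

Lemma pi_two (u : rword M) i j : is_word u -> wdom u i -> wdom u j -> word u i j ->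
  (forall k, wdom u k -> k = i \/ k = j) -> pi u = om_mul pi (wlab u i) (wlab u j).
Proof.
move=> wu di dj ij H.
rewrite (pi_split (Q := fun k => k = j)) //; last first.
  by move=> a b da db ab e; subst a; case: (H b db) => // e; subst b; case: (word_asym wu da db ab).
congr om_mul.
  apply: (pi_single (i := i)); [solve_is_word | split=> // e; subst; exact: word_irr ij |].
  by move=> k [dk nk]; case: (H k dk).
by apply: (pi_single (i := j)); [solve_is_word | split | move=> k []].
Qed.

Lemma om_mul1l x x0 : om_mul pi (om_one pi x0) x = x.
Proof.
pose w := RWord (fun i => i < 1) (fun i j => i < j) (fun _ => x).
have ww : is_word w by exact: is_word_ltn.
have e := pi_split (Q := fun _ => True) ww (fun _ _ _ _ _ t => t).
rewrite (pi_single (i := 0) ww) //= in e; last by case.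
rewrite [RHS]e; congr om_mul.
  by symmetry; apply: pi_empty; [solve_is_word | move=> i /= []].
by symmetry; apply: (pi_single (i := 0)); [solve_is_word | | move=> [|j] []].
Qed.

Lemma om_mul1r x x0 : om_mul pi x (om_one pi x0) = x.
Proof.
pose w := RWord (fun i => i < 1) (fun i j => i < j) (fun _ => x).
have ww : is_word w by exact: is_word_ltn.
have e := pi_split (Q := fun _ => False) ww (fun _ _ _ _ _ f => f).
rewrite (pi_single (i := 0) ww) //= in e; last by case.
rewrite [RHS]e; congr om_mul.
  by symmetry; apply: (pi_single (i := 0)); [solve_is_word | split=> // [] | move=> [|j] []].
by symmetry; apply: pi_empty; [solve_is_word | move=> i /= []].
Qed.
End OrdinalMonoid.

Definition cofinal_seq S (u : rword S) (y : nat -> nat) : Prop :=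
  [/\ forall n, wdom u (y n), forall n, word u (y n) (y n.+1)
    & forall i, wdom u i -> exists n, wle u i (y n)].

Definition piece S (u : rword S) (y : nat -> nat) n i : Prop :=
  wle u i (y n) /\ (if n is n'.+1 then word u (y n') i else True).

Section CofinalSeq.
Variables (S : Type) (u : rword S) (y : nat -> nat).
Hypotheses (wu : is_word u) (cy : cofinal_seq u y).

Lemma cofinal_seq_mono m n : m < n -> word u (y m) (y n).
Proof.
case: cy => dy yS _; elim: n => // n IH.
rewrite ltnS leq_eqVlt => /orP[/eqP->|/IH h]; first exact: yS.
exact: word_trans (yS n).
Qed.

Definition least_cover i n := wle u i (y n) /\ forall m, wle u i (y m) -> n <= m.

Definition cofinal_index i := epsilon (inhabits 0) (least_cover i).

Lemma cofinal_indexP i : wdom u i -> least_cover i (cofinal_index i).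
Proof.
case: cy => _ _ cof di; apply: epsilon_spec.
have ex : exists n, classicb (wle u i (y n)) by have [n hn] := cof i di; exists n; apply/classicbP.
exists (ex_minn ex); case: ex_minnP => n /classicbP hn nmin.
by split=> // m /classicbP; apply: nmin.
Qed.

Lemma cofinal_index_mono i j : wdom u i -> wdom u j -> word u i j ->
  cofinal_index i <= cofinal_index j.
Proof.
case: cy => dy _ _ di dj ij; case: (cofinal_indexP di) => _; apply; left.
by apply: word_wle_trans ij (proj1 (cofinal_indexP dj)).
Qed.

Lemma cofinal_indexE i n : wdom u i -> cofinal_index i = n <-> piece u y n i.
Proof.
case: cy => dy _ _ di; have [iy imin] := cofinal_indexP di; split.
  move=> <-; split=> //; case: (cofinal_index i) iy imin => // k iy imin.
  by apply: (word_of_Nwle wu di (dy k)) => /imin; rewrite ltnn.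
move=> [iyn hn]; apply/eqP; rewrite eqn_leq imin //=.
case: n iyn hn => // k iyn ynj; rewrite ltnNge; apply/negP => le_n.
apply: (word_wleF wu (dy k) di ynj); apply: wle_trans iy _ => //.
by move: le_n; rewrite leq_eqVlt => /orP[/eqP->|/cofinal_seq_mono]; [right|left].
Qed.
End CofinalSeq.

Definition omega_word S (l : nat -> S) := RWord (fun _ => True) (fun i j => i < j) l.

Section Omega.
Variables (M : Type) (pi : rword M -> M).
Hypothesis Hom : ordinal_monoid pi.

Lemma pi_omega (u : rword M) (y : nat -> nat) : is_word u -> cofinal_seq u y ->
  pi u = pi (omega_word (fun n => pi (restrict u (piece u y n)))).
Proof.
move=> wu cy; case: (Hom) => _ _ Has.
rewrite (Has u _ _ (cofinal_index u y) wu (is_word_ltn (fun _ => True) (fun _ => tt))) //.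
- apply: (pi_ext Hom) => //; try exact: is_word_ltn.
  move=> n _ /=; apply: (pi_eq_dom Hom) => //; try solve_is_word.
  by move=> i /=; split=> -[di h]; split=> //; apply/(cofinal_indexE wu cy).
- move=> i j di dj ij; have := cofinal_index_mono wu cy di dj ij.
  by rewrite leq_eqVlt => /orP[/eqP->|->]; auto.
Qed.

Definition alt_word (x y : M) := omega_word (fun i => if odd i then y else x).

Lemma pi_alt x y : pi (alt_word x y) = om_omega pi (om_mul pi x y).
Proof.
have w : is_word (alt_word x y) by exact: is_word_ltn.
have cy : cofinal_seq (alt_word x y) (fun n => (2 * n).+1).
  by split=> //= [n|i _]; [lia | exists i; left=> /=; lia].
rewrite (pi_omega w cy); apply: (pi_ext Hom); try exact: is_word_ltn; try done.
move=> n _ /=; rewrite (pi_two Hom (i := 2 * n) (j := (2 * n).+1)) /=; first by rewrite oddM.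
- solve_is_word.
- by split=> //; split; [left=> /=; lia | case: n => //= n; lia].
- by split=> //; split; [right | case: n => //= n; lia].
- by lia.
- by move=> k [_ [/= k1 k2]]; case: n k1 k2 => [|n] /= k1 k2; rewrite /wle /= in k1; lia.
Qed.

Lemma pi_tail (l : nat -> M) :
  pi (restrict (omega_word l) (fun i => 0 < i)) = pi (omega_word (fun i => l i.+1)).
Proof.
case: Hom => Hiso _ _; apply: Hiso; try solve_is_word.
exists predn; split=> /=.
- by [].
- by move=> j _; exists j.+1.
- by move=> i j [_ i0] [_ j0]; split; lia.
- by move=> [|i] [].
Qed.

Lemma pi_omega_cons x (l : nat -> M) :
  pi (omega_word (fun i => if i == 0 then x else l i)) =
  om_mul pi x (pi (omega_word (fun i => l i.+1))).
Proof.
rewrite (pi_split Hom (Q := fun i => 0 < i)); first last.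
- by move=> /= i j _ _ ij hi; apply: ltn_trans hi ij.
- exact: is_word_ltn.
rewrite pi_tail; congr om_mul.
by apply: (pi_single Hom (i := 0)); [solve_is_word | | move=> [|j] []].
Qed.

Lemma om_mul_omega x : om_mul pi x (om_omega pi x) = om_omega pi x.
Proof.
have E : pi (omega_word (fun i => if i == 0 then x else x)) = om_omega pi x.
  by apply: (pi_ext Hom); try exact: is_word_ltn; move=> // [|i].
by rewrite -[RHS]E (pi_omega_cons x (fun _ => x)).
Qed.

Lemma om_mul_omega_absorb x y : om_mul pi x y = y ->
  om_mul pi x (om_omega pi y) = om_omega pi y.
Proof.
move=> xy; pose V := omega_word (fun i => if i == 0 then x else y).
have wV : is_word V by exact: is_word_ltn.
have cV : cofinal_seq V succn.
  by split=> [//|n|i _]; [exact: ltnSn | exists i; left; exact: ltnSn].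
rewrite -(pi_omega_cons x (fun _ => y)) -/V (pi_omega wV cV).
apply: (pi_ext Hom); try exact: is_word_ltn; try done.
move=> [|n] _ /=.
- rewrite (pi_two Hom (i := 0) (j := 1)) //=; first solve_is_word.
  + by split=> //; split=> //; left.
  + by split=> //; split=> //; right.
  + by move=> [|[|k]] [_ [/= k1 _]]; auto; rewrite /wle /= in k1; lia.
- apply: (pi_single Hom (i := n.+2)); first solve_is_word.
    by split=> //; split; [right | exact: ltnSn].
  by move=> k [_ [/= k1 k2]]; rewrite /wle /= in k1; lia.
Qed.

Lemma om_omega_mul x y : om_omega pi (om_mul pi x y) = om_mul pi x (om_omega pi (om_mul pi y x)).
Proof.
rewrite -!pi_alt.
have -> : pi (alt_word x y) =
    pi (omega_word (fun i => if i == 0 then x else if odd i then y else x)).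
  by apply: (pi_ext Hom); try exact: is_word_ltn; move=> // [|i].
rewrite pi_omega_cons; congr om_mul.
by apply: (pi_ext Hom); try exact: is_word_ltn; move=> // i _ /=; case: (odd i).
Qed.

Definition omega_iter (a : M) k := iter k (om_omega pi) a.

Lemma omega_iter_absorb a j l : j < l ->
  om_mul pi (omega_iter a j) (omega_iter a l) = omega_iter a l.
Proof.
elim: l => // l IH; rewrite ltnS leq_eqVlt => /orP[/eqP->|/IH h].
  exact: om_mul_omega.
exact: om_mul_omega_absorb.
Qed.
End Omega.

Lemma iter_collision (T : finType) (f : T -> T) x :
  exists i j, [/\ i < j, j <= #|T| & iter i f x = iter j f x].
Proof.
apply: NNPP => nocol.
have inj : injective (fun k : 'I_#|T|.+1 => iter k f x).
  move=> k l e; apply: val_inj; case: (ltngtP k l) => // kl; case: nocol.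
  - by exists k, l; split; rewrite -1?ltnS.
  - by exists l, k; split; rewrite -1?ltnS.
by have := leq_card _ inj; rewrite card_ord ltnn.
Qed.

Lemma iter_fixpoint T (f : T -> T) x k : iter k.+1 f x = iter k f x ->
  forall l, k <= l -> iter l f x = iter k f x.
Proof.
move=> fk l /subnKC <-; elim: (l - k) => [|n IH]; first by rewrite addn0.
by rewrite addnS /= IH.
Qed.

Section OmegaIter.
Variables (M : Type) (pi : rword M -> M).
Hypothesis Hom : ordinal_monoid pi.

(* With x_k := omega_iter a k and i + 1 < j: x_{i+1} x_i = x_{i+1} x_j = x_j = x_i, hence
   x_{i+1} = (x_{i+1} x_i)^omega = x_{i+1} (x_i x_{i+1})^omega = x_{i+1} x_{i+1}^omega. *)
Lemma omega_iter_collapse a i j : i < j -> omega_iter pi a i = omega_iter pi a j ->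
  omega_iter pi a i.+2 = omega_iter pi a i.+1.
Proof.
move=> ij eij; have step : omega_iter pi a i.+2 = om_omega pi (omega_iter pi a i.+1) by [].
have [eq_ij | lt_ij] : i.+1 = j \/ i.+1 < j by move: ij; rewrite leq_eqVlt => /orP[/eqP|]; auto.
  have e : omega_iter pi a i.+1 = omega_iter pi a i by rewrite eq_ij -eij.
  by rewrite step e; exact: e.
have e0 : om_mul pi (omega_iter pi a i.+1) (omega_iter pi a i) = omega_iter pi a i.
  by rewrite eij; exact: (omega_iter_absorb Hom a lt_ij).
have := om_omega_mul Hom (omega_iter pi a i.+1) (omega_iter pi a i).
by rewrite e0 (omega_iter_absorb Hom a (ltnSn i)) om_mul_omega.
Qed.
End OmegaIter.

Lemma omega_iter_stable (M : finType) (pi : rword M -> M) : ordinal_monoid pi ->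
  forall a, om_omega pi (omega_iter pi a #|M|) = omega_iter pi a #|M|.
Proof.
move=> Hom a; have [i [j [ij jM eij]]] := iter_collision (om_omega pi) a.
have fix_i := iter_fixpoint (omega_iter_collapse Hom ij eij).
have iM : i.+1 <= #|M| by apply: leq_trans jM.
change (iter #|M|.+1 (om_omega pi) a = iter #|M| (om_omega pi) a).
by rewrite !fix_i // ltnW.
Qed.

Definition has_last S (u : rword S) := exists m, wdom u m /\ forall y, wdom u y -> ~ word u m y.

Lemma above_of_not_has_last S (u : rword S) i : is_word u -> ~ has_last u -> wdom u i ->
  exists j, wdom u j /\ word u i j.
Proof.
move=> wu nl di; apply: NNPP => h; apply: nl; exists i; split=> // j dj ij.
by apply: h; exists j.
Qed.

Section CofinalExists.
Variables (S : Type) (u : rword S).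
Hypotheses (wu : is_word u) (nl : ~ has_last u).

Lemma upper_bound_prefix n c : wdom u c ->
  exists m, [/\ wdom u m, wle u c m & forall i, i <= n -> wdom u i -> wle u i m].
Proof.
move=> dc; elim: n => [|n [m [dm cm Hm]]].
  case: (classic (wdom u 0)) => d0; last by exists c; split=> //; [exact: wle_refl | case].
  have [m [dm c0 Hm]] : exists m, [/\ wdom u m, wle u c m & wle u 0 m].
    case: (word_total wu dc d0) => [<-|[h|h]]; first by exists c; split=> //; exact: wle_refl.
      by exists 0; split=> //; [left | exact: wle_refl].
    by exists c; split=> //; [exact: wle_refl | left].
  by exists m; split=> // -[] // _ _.
have [m' [dm' mm' nm']] : exists m', [/\ wdom u m', wle u m m' & wdom u n.+1 -> wle u n.+1 m'].
  case: (classic (wdom u n.+1)) => dn; last by exists m; split=> //; exact: wle_refl.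
  case: (word_total wu dm dn) => [<-|[h|h]]; first by exists m; split=> // *; exact: wle_refl.
    by exists n.+1; split=> // *; [left | exact: wle_refl].
  by exists m; split=> // *; [exact: wle_refl | left].
exists m'; split=> //; first exact: wle_trans cm mm'.
move=> i; rewrite leq_eqVlt => /orP[/eqP-> //|/Hm im di].
exact: wle_trans (im di) mm'.
Qed.

Definition above_prefix n c d :=
  [/\ wdom u d, word u c d & forall i, i <= n -> wdom u i -> word u i d].

Lemma above_prefix_exists n c : wdom u c -> exists d, above_prefix n c d.
Proof.
move=> dc; have [m [dm cm Hm]] := upper_bound_prefix n dc.
have [d [dd md]] := above_of_not_has_last wu nl dm; exists d; split=> //.
  exact: wle_word_trans cm md.
by move=> i le di; exact: wle_word_trans (Hm i le di) md.
Qed.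

Lemma cofinal_seq_exists c : wdom u c -> exists y, cofinal_seq u y.
Proof.
move=> dc; pose next n c := epsilon (inhabits 0) (above_prefix n c).
have nextP n c' : wdom u c' -> above_prefix n c' (next n c').
  by move=> dc'; apply: epsilon_spec; apply: above_prefix_exists.
pose y := fix y n := if n is n'.+1 then next n (y n') else next 0 c.
have dy n : wdom u (y n).
  by elim: n => [|n IH]; [case: (nextP 0 c dc) | case: (nextP n.+1 _ IH)].
exists y; split=> // [n | i di]; first by case: (nextP n.+1 _ (dy n)).
by exists i.+1; left; case: (nextP i.+1 _ (dy i)) => _ _; apply.
Qed.
End CofinalExists.

Definition subword S (v w : rword S) :=
  [/\ word v = word w, wlab v = wlab w & forall i, wdom v i -> wdom w i].

Definition last_of S (v : rword S) x := wdom v x /\ forall j, wdom v j -> wle v j x.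

Lemma subword_restrict S (w : rword S) P : subword (restrict w P) w.
Proof. by split=> // i []. Qed.

Lemma subword_trans S (u v w : rword S) : subword u v -> subword v w -> subword u w.
Proof. by case=> e1 l1 d1 [e2 l2 d2]; split=> [|| i /d1 /d2]; rewrite ?e1 ?l1. Qed.

Lemma subword_dom S (v w : rword S) i : subword v w -> wdom v i -> wdom w i.
Proof. by case=> _ _; apply. Qed.

Lemma is_word_subword S (v w : rword S) : is_word w -> subword v w -> is_word v.
Proof. by case: v => D R l wu [/= -> _ dv]; apply: is_word_sub wu dv. Qed.

Lemma last_of_has_last S (v : rword S) : is_word v -> has_last v -> exists x, last_of v x.
Proof.
by move=> wv [x [dx xmax]]; exists x; split=> // j dj; apply: (wle_of_Nword wv dx dj (xmax j dj)).
Qed.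

Lemma last_of_piece S (v : rword S) y n : is_word v -> cofinal_seq v y ->
  last_of (restrict v (piece v y n)) (y n).
Proof.
move=> wv [dy yS _]; split=> [|j [_ []] //]; split; first exact: dy.
split; first exact: wle_refl.
by case: n => // n; apply: yS.
Qed.

Section IdempotentLetter.
Variables (M : Type) (pi : rword M -> M).
Hypothesis Hom : ordinal_monoid pi.
Variable z : M.
Hypothesis hz : om_omega pi z = z.

Lemma om_mul_idem : om_mul pi z z = z.
Proof. by have := om_mul_omega Hom z; rewrite hz. Qed.

Definition const_on (v : rword M) := forall i, wdom v i -> wlab v i = z.

(* Either [w] has a last element, or it is the omega-product of the pieces of a cofinal
   sequence, each of which has one. *)
Lemma pi_idempotent_of_last_subwords (w : rword M) : is_word w -> (exists i, wdom w i) ->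
  (forall v x, subword v w -> last_of v x -> pi v = z) -> pi w = z.
Proof.
move=> ww [i0 di0] H; case: (classic (has_last w)) => [hl|nl].
  by have [x lx] := last_of_has_last ww hl; apply: H lx; split.
have [y cy] := cofinal_seq_exists ww nl di0.
rewrite (pi_omega Hom ww cy) -[RHS]hz; apply: (pi_ext Hom); try exact: is_word_ltn; try done.
by move=> n _; apply: H (subword_restrict _ _) (last_of_piece n ww cy).
Qed.

Section Ambient.
Variable u : rword M.
Hypothesis wu : is_word u.

Lemma pi_idempotent_last x : wdom u x -> forall v, subword v u -> const_on v -> last_of v x -> pi v = z.
Proof.
move: x; apply: (word_ind wu) => x dx IH v sv cv [dvx xmax].
have wv := is_word_subword wu sv.
rewrite (pi_split Hom (Q := fun i => i = x)) //; last first.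
  move=> i j di dj ij e; subst i; case: (word_wleF wv dvx dj ij (xmax j dj)).
have -> : pi (restrict v (fun i => i = x)) = z.
  by rewrite (pi_single Hom (i := x)) /=; [exact: cv | solve_is_word | | move=> j []].
set w := restrict v _; have ww : is_word w by solve_is_word.
case: (classic (exists i, wdom w i)) => [ne|em]; last first.
  by rewrite (pi_empty Hom z) ?om_mul1l // => i di; apply: em; exists i.
rewrite (pi_idempotent_of_last_subwords ww ne) ?om_mul_idem // => v' y sv' [dy ymax].
have [dvy nyx] : wdom w y := subword_dom sv' dy.
have svu : subword v' u := subword_trans sv' (subword_trans (subword_restrict _ _) sv).
apply: (IH y) => //.
- exact: subword_dom sv dvy.
- by case: (sv) => <- _ _; case: (xmax y dvy).
- by case: sv' => _ e dv' i /dv' [/cv]; rewrite e.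
Qed.
End Ambient.

Lemma pi_idempotent (v : rword M) : is_word v -> const_on v -> (exists i, wdom v i) ->
  pi v = z.
Proof.
move=> wv cv ne; apply: pi_idempotent_of_last_subwords => // w x sw lx.
apply: (pi_idempotent_last wv (x := x)) => //; first exact: subword_dom sw lx.1.
by case: sw => _ e dw i /dw /cv; rewrite e.
Qed.
End IdempotentLetter.

Section Blocks.
Variables (S : Type) (u : rword S).
Hypothesis wu : is_word u.

(* Positions that are not successors: the first position and the limit positions. *)
Definition limit_pos x := wdom u x /\
  forall y, wdom u y -> word u y x -> exists z, [/\ wdom u z, word u y z & word u z x].

Lemma limit_pos_dom x : limit_pos x -> wdom u x.
Proof. by case. Qed.

Definition is_block_start x p :=
  [/\ limit_pos p, wle u p x & forall q, limit_pos q -> wle u q x -> wle u q p].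

Definition block_start x := epsilon (inhabits 0) (is_block_start x).

Lemma block_start_exists x : wdom u x -> exists p, is_block_start x p.
Proof.
move=> dx; pose T q := [/\ wdom u q, wle u q x & forall r, limit_pos r -> wle u r x -> wle u r q].
have [p [[dp px Hp] pmin]] := word_wf wu (P := T) (fun i h => let: And3 d _ _ := h in d)
   (ex_intro _ x (And3 dx (wle_refl u x) (fun r _ h => h))).
exists p; split=> //; split=> // y dy yp; apply: NNPP => nz.
have [r [Lr rx nry]] : exists r, [/\ limit_pos r, wle u r x & ~ wle u r y].
  apply: NNPP => h; apply: (pmin y _ yp); split=> // [|r Lr rx].
    by left; exact: word_wle_trans yp px.
  by apply: NNPP => nr; apply: h; exists r.
have yr : word u y r := word_of_Nwle wu (limit_pos_dom Lr) dy nry.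
case: (Hp r Lr rx) => [rp|e]; first by apply: nz; exists r; split=> //; exact: limit_pos_dom.
by subst r; case: Lr => _ /(_ y dy yp) [z [dz yz zp]]; apply: nz; exists z.
Qed.

Lemma block_startP x : wdom u x -> is_block_start x (block_start x).
Proof. by move=> dx; apply: epsilon_spec; apply: block_start_exists. Qed.

Lemma block_start_limit x : wdom u x -> limit_pos (block_start x).
Proof. by case/block_startP. Qed.

Lemma block_start_dom x : wdom u x -> wdom u (block_start x).
Proof. by move/block_start_limit/limit_pos_dom. Qed.

Lemma block_start_le x : wdom u x -> wle u (block_start x) x.
Proof. by case/block_startP. Qed.

Lemma limit_le_block_start p x : wdom u x -> limit_pos p -> wle u p x -> wle u p (block_start x).
Proof. by move=> dx Lp px; case: (block_startP dx) => _ _; apply. Qed.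

Lemma block_start_id p : limit_pos p -> block_start p = p.
Proof.
move=> Lp; have dp := limit_pos_dom Lp.
apply: wle_anti (block_start_le dp) _ => //; first exact: block_start_dom.
exact: limit_le_block_start (wle_refl u p).
Qed.

Lemma block_start_mono x y : wdom u x -> wdom u y -> wle u x y ->
  wle u (block_start x) (block_start y).
Proof.
move=> dx dy xy; apply: limit_le_block_start; first exact: dy.
  exact: block_start_limit.
by apply: wle_trans (block_start_le dx) xy => //; apply: block_start_dom.
Qed.

Definition is_succ x s := [/\ wdom u s, word u x s & forall t, wdom u t -> word u x t -> wle u s t].

Definition succ_pos x := epsilon (inhabits 0) (is_succ x).

Lemma succ_posP x t : wdom u t -> word u x t -> is_succ x (succ_pos x).
Proof.
move=> dt xt; apply: epsilon_spec.
have [s [[ds xs] smin]] := word_wf wu (P := fun s => wdom u s /\ word u x s) (fun i h => proj1 h)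
   (ex_intro _ t (conj dt xt)).
exists s; split=> // t' dt' xt'; apply: (wle_of_Nword wu dt' ds) => ts.
exact: (smin t' (conj dt' xt') ts).
Qed.

Lemma is_succ_limitF x s : wdom u x -> is_succ x s -> ~ limit_pos s.
Proof.
move=> dx [ds xs smin] [_ /(_ x dx xs) [z [dz xz zs]]].
exact: (word_wleF wu dz ds zs (smin z dz xz)).
Qed.

(* A successor position is not a limit, so it stays in the block of its predecessor. *)
Lemma block_start_succ x s : wdom u x -> is_succ x s -> block_start s = block_start x.
Proof.
move=> dx sx; case: (sx) => ds xs smin; have dq := block_start_dom ds.
apply: (wle_anti wu dq (block_start_dom dx)); last first.
  by apply: block_start_mono => //; left.
case: (block_start_le ds) => [qs|qs]; last first.
  by case: (is_succ_limitF dx sx); rewrite -qs; apply: block_start_limit.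
apply: limit_le_block_start => //; first exact: block_start_limit.
apply: (wle_of_Nword wu dx dq) => xq.
exact: (word_wleF wu dq ds qs (smin _ dq xq)).
Qed.

Definition in_block p x := block_start x = p.

Definition succ_chain p n := forall k, k < n -> is_succ (iter k succ_pos p) (iter k.+1 succ_pos p).

Section SuccChain.
Variables (p n : nat).
Hypotheses (Lp : limit_pos p) (ch : succ_chain p n).

Lemma succ_chain_dom k : k <= n -> wdom u (iter k succ_pos p).
Proof. by case: k => [_|k kn]; [exact: limit_pos_dom | case: (ch kn)]. Qed.

Lemma succ_chain_mono k l : k < l -> l <= n -> word u (iter k succ_pos p) (iter l succ_pos p).
Proof.
elim: l => // l IH; rewrite ltnS leq_eqVlt => /orP[/eqP<- ln|kl ln]; first by case: (ch ln).
apply: (word_trans wu _ _ _ (IH kl (ltnW ln))); last by case: (ch ln).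
all: apply: succ_chain_dom => //; lia.
Qed.

Lemma succ_chain_in_block k : k <= n -> in_block p (iter k succ_pos p).
Proof.
elim: k => [_|k IH kn]; first exact: block_start_id.
by rewrite /in_block (block_start_succ (succ_chain_dom (ltnW kn)) (ch kn)) IH // ltnW.
Qed.
End SuccChain.

Lemma in_block_succ_iter p : limit_pos p -> forall x, wdom u x -> in_block p x ->
  exists n, x = iter n succ_pos p /\ succ_chain p n.
Proof.
move=> Lp; have dp := limit_pos_dom Lp.
apply: (word_ind wu) => x dx IH bx.
case: (classic (limit_pos x)) => [Lx|nLx].
  by exists 0; split=> //; rewrite -bx block_start_id.
have [y [dy yx nz]] : exists y, [/\ wdom u y, word u y x &
    ~ exists z, [/\ wdom u z, word u y z & word u z x]].
  apply: NNPP => h; apply: nLx; split=> // y dy yx; apply: NNPP => nz; apply: h; by exists y.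
have [ds ys smin] := succ_posP dx yx.
have sx : succ_pos y = x.
  by case: (smin x dx yx) => // sx; case: nz; exists (succ_pos y).
have sy : is_succ y x by rewrite -sx; exact: succ_posP yx.
have [n [ey ch]] := IH y dy yx (etrans (esym (block_start_succ dy sy)) bx).
exists n.+1; split; first by rewrite iterS -ey sx.
by move=> k; rewrite ltnS leq_eqVlt => /orP[/eqP->|/ch //]; rewrite iterS -ey sx.
Qed.
End Blocks.

Lemma succ_chain_all S (u : rword S) p : is_word u -> limit_pos u p ->
  (forall x, wdom u x -> in_block u p x -> exists t, wdom u t /\ word u x t) ->
  forall n, succ_chain u p n.
Proof.
move=> wu Lp above; elim=> [|n ch]; first by [].
have dn := succ_chain_dom Lp ch (leqnn n).
have [t [dt nt]] := above _ dn (succ_chain_in_block wu Lp ch (leqnn n)).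
by move=> k; rewrite ltnS leq_eqVlt => /orP[/eqP->|/ch //]; apply: succ_posP nt.
Qed.

Fixpoint chain_above S (u : rword S) j v : Prop :=
  if j is j'.+1 then exists i, [/\ wdom u i, word u v i & chain_above u j' i] else True.

Section LastBlock.
Variables (S : Type) (u : rword S) (p c : nat).
Hypotheses (wu : is_word u) (Lp : limit_pos u p) (ch : succ_chain u p c).
Hypothesis mlast : forall y, wdom u y -> wle u y (iter c (succ_pos u) p).

Let y k := iter k (succ_pos u) p.

Lemma last_block_index x : wdom u x -> in_block u p x -> exists2 k, k <= c & x = y k.
Proof.
move=> dx bx; have [n [-> chn]] := in_block_succ_iter wu Lp dx bx.
exists n => //; rewrite leqNgt; apply/negP => cn.
have dn := succ_chain_dom Lp chn (leqnn n).
exact: (word_wleF wu (succ_chain_dom Lp ch (leqnn c)) dn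
  (succ_chain_mono wu Lp chn cn (leqnn n)) (mlast dn)).
Qed.

Lemma in_last_block x : wdom u x -> wle u p x -> in_block u p x.
Proof.
move=> dx px; have dp := limit_pos_dom Lp; have dm := succ_chain_dom Lp ch (leqnn c).
apply: (wle_anti wu (block_start_dom wu dx) dp); last exact: limit_le_block_start.
rewrite -{1}(succ_chain_in_block wu Lp ch (leqnn c)).
exact: block_start_mono (mlast dx).
Qed.

Lemma last_block_wle k l : k <= l -> l <= c -> wle u (y k) (y l).
Proof.
rewrite leq_eqVlt => /orP[/eqP-> _|kl lc]; first exact: wle_refl.
by left; apply: (succ_chain_mono wu Lp ch).
Qed.

Lemma chain_above_last_block j k : k <= c -> chain_above u j (y k) <-> j + k <= c.
Proof.
elim: j k => [|j IH] k kc /=; first by split.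
split=> [[i [di yi ci]] | jk]; last first.
  exists (y k.+1); split; last by apply/IH; lia.
    by apply: (succ_chain_dom Lp ch); lia.
  by apply: (succ_chain_mono wu Lp ch); lia.
have dp := limit_pos_dom Lp; have dk := succ_chain_dom Lp ch kc.
have pi_ : wle u p i by left; apply: wle_word_trans (last_block_wle (leq0n k) kc) yi.
have [l lc el] := last_block_index di (in_last_block di pi_); subst i.
have kl : k < l.
  rewrite ltnNge; apply/negP => lk.
  exact: (word_wleF wu dk (succ_chain_dom Lp ch lc) yi (last_block_wle lk kc)).
by have := proj1 (IH l lc) ci; lia.
Qed.
End LastBlock.

Definition block_word S T (u : rword S) (b : T) p := restrict (const_word u b) (in_block u p).

Section PiBlocks.
Variables (M : Type) (pi : rword M -> M).
Hypothesis Hom : ordinal_monoid pi.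

Lemma pi_finite_chain b c (V : rword M) (y : nat -> nat) : is_word V ->
  (forall i, wdom V i -> wlab V i = b) ->
  (forall i, wdom V i <-> exists2 k, k <= c & i = y k) ->
  (forall k l, k < l -> l <= c -> word V (y k) (y l)) ->
  pi V = om_pow pi b c.+1.
Proof.
elim: c V y => [|c IH] V y wV lab hd hinc.
  rewrite (pi_single Hom (i := y 0)) //.
  - by rewrite lab ?hd //=; [rewrite om_mul1r | exists 0].
  - by apply/hd; exists 0.
  - by move=> j /hd [[|k] //] ->.
have dy0 : wdom V (y 0) by apply/hd; exists 0.
rewrite (pi_split Hom (Q := fun i => word V (y 0) i)) //; last first.
  by move=> i j di dj ij h; apply: (word_trans wV dy0 di dj h ij).
have -> : pi (restrict V (fun i => ~ word V (y 0) i)) = b.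
  rewrite (pi_single Hom (i := y 0)) /=; [exact: lab | solve_is_word | split=> //; exact: word_irr |].
  by move=> j [/hd [[|k] // kc ->] h]; case: h; apply: hinc.
rewrite (IH _ (fun k => y k.+1)) //; first solve_is_word.
- by move=> i [di _]; apply: lab.
- move=> i /=; split=> [[/hd [[|k] kc ->] h] | [k kc ->]].
    by case: (word_irr wV dy0 h).
    by exists k.
  by split; [apply/hd; exists k.+1 | apply: hinc].
- by move=> k l kl lc; apply: hinc.
Qed.

Lemma pi_block_omega (u : rword M) b p : is_word u -> limit_pos u p ->
  (forall x, wdom u x -> in_block u p x -> exists t, wdom u t /\ word u x t) ->
  pi (block_word u b p) = om_omega pi b.
Proof.
move=> wu Lp above; set W := block_word u b p.
have wW : is_word W by rewrite /W /block_word; solve_is_word.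
have ch := succ_chain_all wu Lp above; pose y n := iter n (succ_pos u) p.
have dy n : wdom u (y n) := succ_chain_dom Lp (ch n) (leqnn n).
have cy : cofinal_seq W y.
  split=> [n | n | i [di bi]]; first by split; [exact: dy | exact: succ_chain_in_block (leqnn n)].
    by case: (ch n.+1 n (ltnSn n)).
  by have [n [-> _]] := in_block_succ_iter wu Lp di bi; exists n; right.
rewrite (pi_omega Hom wW cy); apply: (pi_ext Hom); try exact: is_word_ltn; try done.
move=> n _ /=; rewrite (pi_single Hom (i := y n)) //=; first solve_is_word.
  split; first by case: cy => + _ _; apply.
  by split; [exact: wle_refl | case: n => // n; case: (ch n.+1 n (ltnSn n))].
move=> j [[dj bj] [jy hj]]; apply: (wle_anti wu dj (dy n) jy); case: n hj {jy} => [_|n yj].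
  by rewrite /y /= -bj; apply: block_start_le.
by case: (ch n.+1 n (ltnSn n)) => _ _; apply.
Qed.

Lemma pi_last_block (u : rword M) b m : is_word u -> wdom u m -> (forall y, wdom u y -> wle u y m) ->
  exists c, pi (block_word u b (block_start u m)) = om_pow pi b c.+1 /\
    forall j, chain_above u j (block_start u m) <-> j <= c.
Proof.
move=> wu dm mlast; set p := block_start u m; have Lp := block_start_limit wu dm.
have [c [em ch]] := in_block_succ_iter wu Lp dm (erefl p); rewrite em in mlast.
exists c; split; last by move=> j; have := chain_above_last_block wu Lp ch mlast j (leq0n c); rewrite addn0.
apply: (pi_finite_chain (y := fun k => iter k (succ_pos u) p)); first by rewrite /block_word; solve_is_word.
- by [].
- move=> i; split=> [[di bi] | [k kc ->]]; first exact: (last_block_index wu Lp ch mlast di bi).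
  by split; [exact: (succ_chain_dom Lp ch kc) | exact: (succ_chain_in_block wu Lp ch kc)].
- by move=> k l; apply: (succ_chain_mono wu Lp ch).
Qed.
End PiBlocks.

Definition last_limit S (u : rword S) x := limit_pos u x /\ forall y, limit_pos u y -> ~ word u x y.

(* The starts of the blocks of order type omega: all limit positions except the start of
   the final finite block, which exists when the word has a last position. *)
Definition omega_start S (u : rword S) x := limit_pos u x /\ ~ (has_last u /\ last_limit u x).

Section LastPosition.
Variables (S : Type) (u : rword S) (m : nat).
Hypotheses (wu : is_word u) (dm : wdom u m) (mlast : forall y, wdom u y -> wle u y m).

Lemma has_last_of_last : has_last u.
Proof. by exists m; split=> // y dy my; exact: (word_wleF wu dm dy my (mlast dy)). Qed.

Lemma limit_le_last_block_start r : limit_pos u r -> wle u r (block_start u m).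
Proof. by move=> Lr; apply: limit_le_block_start => //; apply: mlast; apply: limit_pos_dom. Qed.

Lemma last_limitE x : last_limit u x <-> x = block_start u m.
Proof.
have Lp0 := block_start_limit wu dm.
split=> [[Lx xmax] | ->]; last first.
  split=> // y Ly py; apply: (word_wleF wu (limit_pos_dom Lp0) (limit_pos_dom Ly) py).
  exact: limit_le_last_block_start.
by case: (limit_le_last_block_start Lx) => // xp; case: (xmax _ Lp0 xp).
Qed.

Lemma omega_start_last x : omega_start u x <-> limit_pos u x /\ x <> block_start u m.
Proof.
rewrite /omega_start last_limitE; split=> -[Lx h]; split=> //.
  by move=> e; apply: h; split=> //; exact: has_last_of_last.
by move=> [_ e]; apply: h e.
Qed.
End LastPosition.

Section Decomposition.
Variables (M : Type) (pi : rword M -> M).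
Hypothesis Hom : ordinal_monoid pi.
Variable u : rword M.
Hypothesis wu : is_word u.

Lemma pi_blocks b : pi (const_word u b) =
  pi (RWord (limit_pos u) (word u) (fun p => pi (block_word u b p))).
Proof.
case: (Hom) => _ _ Has; apply: Has.
- exact: is_word_const.
- by apply: is_word_sub wu _; apply: limit_pos_dom.
- by move=> i; apply: block_start_limit.
- by move=> i j di dj ij; case: (block_start_mono wu di dj (or_introl ij)); auto.
Qed.

Lemma pi_omega_blocks b (D : nat -> Prop) :
  (forall p, D p -> omega_start u p) ->
  (forall p x, D p -> wdom u x -> in_block u p x -> exists t, wdom u t /\ word u x t) ->
  pi (RWord D (word u) (fun p => pi (block_word u b p))) =
  pi (const_word (restrict u D) (om_omega pi b)).
Proof.
move=> Ds above; apply: (pi_ext Hom) => //.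
- by apply: is_word_sub wu _ => p /Ds [/limit_pos_dom].
- by apply: is_word_const; apply: is_word_sub wu _ => p [].
- by move=> i; split=> [Di | [] //]; split=> //; case: (Ds i Di) => /limit_pos_dom.
- by move=> p Dp /=; apply: pi_block_omega => //; [case: (Ds p Dp) | move=> x; exact: above].
Qed.

Lemma pi_const_no_last b : ~ has_last u ->
  pi (const_word u b) = pi (const_word (restrict u (omega_start u)) (om_omega pi b)).
Proof.
move=> nl; rewrite pi_blocks -(@pi_omega_blocks b (omega_start u)) //; last first.
  by move=> p x _ dx _; apply: above_of_not_has_last.
apply: (pi_eq_dom Hom) => //.
- by apply: is_word_sub wu _; apply: limit_pos_dom.
- by apply: is_word_sub wu _ => p [/limit_pos_dom].
- by move=> p; split=> [Lp | []//]; split=> // -[].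
Qed.

Lemma pi_const_last b m : wdom u m -> (forall y, wdom u y -> wle u y m) ->
  pi (const_word u b) = om_mul pi (pi (const_word (restrict u (omega_start u)) (om_omega pi b)))
                                  (pi (block_word u b (block_start u m))).
Proof.
move=> dm mlast; set p0 := block_start u m; have startE := omega_start_last wu dm mlast.
have wL : is_word (RWord (limit_pos u) (word u) (fun p => pi (block_word u b p))).
  by apply: is_word_sub wu _; apply: limit_pos_dom.
rewrite pi_blocks (pi_split Hom (Q := fun i => i = p0) wL); last first.
  move=> i j di dj ij e; subst i; case: (word_wleF wu (limit_pos_dom di) (limit_pos_dom dj) ij).
  exact: limit_le_last_block_start.
congr om_mul; last first.
  by rewrite (pi_single Hom (i := p0)) //; [solve_is_word | split=> //; exact: block_start_limit | move=> j [_ e]].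
transitivity (pi (const_word (restrict u (fun p => limit_pos u p /\ p <> p0)) (om_omega pi b))).
  rewrite -pi_omega_blocks => [|p|p x [_ np] dx bx]; first last.
  - exists m; split=> //; apply: (word_of_Nwle wu dm dx) => -[mx | e].
      exact: (word_wleF wu dm dx mx (mlast x dx)).
    by apply: np; rewrite -bx -e.
  - by move/startE.
  apply: (pi_eq_dom Hom) => //; first solve_is_word.
  by apply: is_word_sub wu _ => p [/limit_pos_dom].
by apply: (pi_eq_dom Hom) => //; try solve_is_word; move=> p /=; rewrite startE.
Qed.
End Decomposition.

Definition last_block_size S (u : rword S) c :=
  exists v, [/\ last_limit u v, chain_above u c v & ~ chain_above u c.+1 v].

Lemma last_block_sizeE S (u : rword S) m c : is_word u -> wdom u m ->
  (forall y, wdom u y -> wle u y m) -> (forall j, chain_above u j (block_start u m) <-> j <= c) ->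
  forall c', last_block_size u c' <-> c' = c.
Proof.
move=> wu dm mlast hc c'; have lastE := last_limitE wu dm mlast.
split=> [[v [/lastE -> /hc h1 /hc h2]] | ->]; first lia.
by exists (block_start u m); split; [apply/lastE | apply/hc | rewrite hc ltnn].
Qed.

Section Approximant.
Variables (M : finType) (pi : rword M -> M) (sharp : M -> M).

(* The value of the last block is b^(c+1) with c+1 its size; above |M|! it is replaced by
   the merge b^sharp, so that only finitely many sizes have to be told apart. *)
Definition last_block_approx (u : rword M) b :=
  foldr (fun c r => if classicb (last_block_size u c) then om_pow pi b c.+1 else r)
    (sharp b) (iota 0 #|M|`!).

Lemma last_block_approxE (u : rword M) b c : (forall c', last_block_size u c' <-> c' = c) ->
  last_block_approx u b = if c < #|M|`! then om_pow pi b c.+1 else sharp b.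
Proof.
move=> hc; have -> : (c < #|M|`!) = (c \in iota 0 #|M|`!) by rewrite mem_iota.
rewrite /last_block_approx; elim: (iota 0 #|M|`!) => //= c' s ->; rewrite in_cons.
by case: classicbP => /hc; [move=> ->; rewrite eqxx | case: eqP => // ->].
Qed.

(* The base case returns [b] for nonempty words; it is exact once [b] is idempotent for
   omega, which holds for [omega_iter a #|M|] (omega_iter_stable). *)
Fixpoint rho n b (u : rword M) : M :=
  if classicb (exists i, wdom u i) then
    if n is n'.+1 then
      let r := rho n' (om_omega pi b) (restrict u (omega_start u)) in
      if classicb (has_last u) then om_mul pi r (last_block_approx u b) else r
    else b
  else om_one pi b.
End Approximant.

Section Bound.
Variables (M : finType) (pi : rword M -> M) (le : rel M) (sharp : M -> M).
Hypotheses (Hom : ordinal_monoid pi) (Hord : ordered_om pi le) (Hmerge : merge_axioms pi le sharp).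

Lemma om_le_refl x : le x x.
Proof. by case: Hord. Qed.

Lemma om_le_mul x x' y y' : le x x' -> le y y' -> le (om_mul pi x y) (om_mul pi x' y').
Proof.
move=> hx hy; case: Hord => _ _ _ H; apply: H => //; first exact: is_word_ltn.
by move=> [|i].
Qed.

Lemma om_pow_le_approx b c :
  le (om_pow pi b c.+1) (if c < #|M|`! then om_pow pi b c.+1 else sharp b).
Proof.
case: ltnP => cN; first exact: om_le_refl.
case: Hmerge => _ H _ _ _; have := H b (c.+1 - #|M|`!).
by rewrite /om_bang_plus subnKC // leqW.
Qed.

Lemma pi_le_last_block_approx (u : rword M) b m : is_word u -> wdom u m ->
  (forall y, wdom u y -> wle u y m) ->
  le (pi (block_word u b (block_start u m))) (last_block_approx pi sharp u b).
Proof.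
move=> wu dm mlast; have [c [-> hc]] := pi_last_block Hom b wu dm mlast.
by rewrite (last_block_approxE _ _ _ (last_block_sizeE wu dm mlast hc)); apply: om_pow_le_approx.
Qed.

Lemma pi_const_le_rho n : forall b, om_omega pi (omega_iter pi b n) = omega_iter pi b n ->
  forall u, is_word u -> le (pi (const_word u b)) (rho pi sharp n b u).
Proof.
have pi_nil (u : rword M) b : is_word u -> ~ (exists i, wdom u i) ->
    le (pi (const_word u b)) (om_one pi b).
  by move=> wu em; rewrite (pi_empty Hom b); [exact: om_le_refl | exact: is_word_const |
    move=> i di; apply: em; exists i].
elim: n => [|n IH] b hb u wu /=; case: classicbP => [ne | /(pi_nil _ b wu) //].
  by rewrite (pi_idempotent Hom hb (is_word_const b wu)) //; exact: om_le_refl.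
have hb' : om_omega pi (omega_iter pi (om_omega pi b) n) = omega_iter pi (om_omega pi b) n.
  by move: hb; rewrite /omega_iter -iterSr.
have IHu := IH _ hb' (restrict u (omega_start u)) (is_word_restrict _ wu).
case: classicbP => [[m [dm mmax]] | nl]; last by rewrite (pi_const_no_last Hom wu b nl).
have mlast y : wdom u y -> wle u y m by move=> dy; apply: (wle_of_Nword wu dm dy (mmax y dy)).
rewrite (pi_const_last Hom wu b dm mlast); apply: om_le_mul => //.
exact: pi_le_last_block_approx.
Qed.
End Bound.

Ltac simpl_var_eq := repeat match goal with
 | |- context [?a == ?b] =>
   let E := fresh "E" in
   first [ assert (E : (a == b) = false) by (apply/eqP; lia)
         | assert (E : (a == b) = true) by (apply/eqP; lia) ]; rewrite E; clear E
 end.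

Section FOFormulas.
Variable S : Type.
Implicit Types (u : rword S) (nu : nat -> nat).

Definition fo_true : fo S := FNot FFalse.
Definition fo_imp (p q : fo S) := FNot (FAnd p (FNot q)).
Definition fo_all x (p : fo S) := FNot (FEx x (FNot p)).

Lemma fo_sat_imp u nu p q : fo_sat u nu (fo_imp p q) <-> (fo_sat u nu p -> fo_sat u nu q).
Proof. by rewrite /=; split=> [h hp | h [hp]]; [apply: NNPP => hq; apply: h | apply; apply: h]. Qed.

Lemma fo_sat_all u nu x p : fo_sat u nu (fo_all x p) <->
  forall i, wdom u i -> fo_sat u (fun y => if y == x then i else nu y) p.
Proof.
rewrite /=; split=> [h i di | h [i [di hn]]]; last by apply: hn; apply: h.
by apply: NNPP => hn; apply: h; exists i.
Qed.

(* Formulas [f x] below have [x] as their only free variable and use only the variables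
   above [x] as bound ones. *)
Definition limit_f x : fo S :=
  fo_all x.+1 (fo_imp (FLt _ x.+1 x) (FEx x.+2 (FAnd (FLt _ x.+1 x.+2) (FLt _ x.+2 x)))).

Definition last_limit_f x : fo S :=
  FAnd (limit_f x) (fo_all x.+3 (fo_imp (limit_f x.+3) (FNot (FLt _ x x.+3)))).

Definition has_last_f : fo S := FEx 0 (fo_all 1 (FNot (FLt _ 0 1))).

Definition omega_start_f x : fo S := FAnd (limit_f x) (FNot (FAnd has_last_f (last_limit_f x))).

Fixpoint chain_above_f c x : fo S :=
  if c is c'.+1 then FEx x.+1 (FAnd (FLt _ x x.+1) (chain_above_f c' x.+1)) else fo_true.

Definition last_block_size_f c : fo S :=
  FEx 0 (FAnd (last_limit_f 0) (FAnd (chain_above_f c 0) (FNot (chain_above_f c.+1 0)))).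

Definition nonempty_f : fo S := FEx 0 fo_true.

Definition all_letters_f (a : S) : fo S := fo_all 0 (FLab a 0).

Lemma limit_f_free z x : fo_free z (limit_f x) -> z = x.
Proof. by rewrite /limit_f /= => h; apply/eqP; move: h; lia. Qed.

Lemma last_limit_f_free z x : fo_free z (last_limit_f x) -> z = x.
Proof.
rewrite /last_limit_f /= => /orP[/limit_f_free // | /andP[h1 /orP[/limit_f_free e | h2]]].
  by rewrite e eqxx in h1.
by move/eqP: h1; move: h2; lia.
Qed.

Lemma chain_above_f_free c : forall z x, fo_free z (chain_above_f c x) -> z = x.
Proof.
elim: c => [|c IH] z x //= /andP[h1 /orP[h2 | /IH h3]]; last by rewrite h3 eqxx in h1.
by move/eqP: h1; move: h2; lia.
Qed.

Lemma omega_start_f_free z x : fo_free z (omega_start_f x) -> z = x.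
Proof.
rewrite /omega_start_f /= => /orP[/limit_f_free // | /orP[h | /last_limit_f_free //]].
by move: h; lia.
Qed.

Lemma has_last_f_sentence : fo_sentence has_last_f.
Proof. by move=> z /=; lia. Qed.

Lemma last_block_size_f_sentence c : fo_sentence (last_block_size_f c).
Proof.
move=> z /=; apply/negP => /andP[h1 /orP[h | /orP[h | h]]].
- by move: (last_limit_f_free h) h1 => ->.
- by move: (chain_above_f_free h) h1 => ->.
- move: h => /andP[h2 /orP[h3 | /chain_above_f_free h3]]; first by move: h1 h2 h3; lia.
  by move: h2; rewrite h3 eqxx.
Qed.

Lemma nonempty_f_sentence : fo_sentence nonempty_f.
Proof. by move=> z /=; rewrite andbF. Qed.

Lemma all_letters_f_sentence a : fo_sentence (all_letters_f a).
Proof. by move=> z /=; lia. Qed.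

Opaque fo_all fo_imp.

Lemma limit_f_sat u nu x : wdom u (nu x) -> (fo_sat u nu (limit_f x) <-> limit_pos u (nu x)).
Proof.
move=> dx; rewrite /limit_f fo_sat_all; split.
  move=> h; split=> // y dy yx; have := h y dy; rewrite fo_sat_imp /=; simpl_var_eq.
  by move=> /(_ yx) [z [dz]]; simpl_var_eq => -[h1 h2]; exists z.
move=> [_ h] i di; rewrite fo_sat_imp /=; simpl_var_eq => ix.
by have [z [dz iz zx]] := h i di ix; exists z; simpl_var_eq.
Qed.

Opaque limit_f.

Lemma last_limit_f_sat u nu x : wdom u (nu x) ->
  (fo_sat u nu (last_limit_f x) <-> last_limit u (nu x)).
Proof.
move=> dx; rewrite /last_limit_f /= (limit_f_sat dx) fo_sat_all.
split=> -[h1 h2]; split=> // i.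
  move=> Li; have di := limit_pos_dom Li.
  have := h2 i di; rewrite fo_sat_imp /= limit_f_sat /=; simpl_var_eq => //.
  by move=> /(_ Li).
by move=> di; rewrite fo_sat_imp limit_f_sat /=; simpl_var_eq => //; exact: h2.
Qed.

Opaque last_limit_f.

Lemma has_last_f_sat u nu : fo_sat u nu has_last_f <-> has_last u.
Proof.
rewrite /has_last_f /=; split=> -[m [dm h]]; exists m; split=> //.
  by move=> y dy; move/fo_sat_all: h => /(_ y dy) /=.
by apply/fo_sat_all => y dy /=; apply: h.
Qed.

Opaque has_last_f.

Lemma omega_start_f_sat u nu x : wdom u (nu x) ->
  (fo_sat u nu (omega_start_f x) <-> omega_start u (nu x)).
Proof. by move=> dx; rewrite /= (limit_f_sat dx) has_last_f_sat (last_limit_f_sat dx). Qed.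

Lemma chain_above_f_sat u c : forall x nu, fo_sat u nu (chain_above_f c x) <-> chain_above u c (nu x).
Proof.
elim: c => [|c IH] x nu; rewrite /chain_above_f -/chain_above_f /=; first by split=> // _ [].
split=> [[i [di]] | [i [di h1 h2]]]; last by exists i; split=> //; rewrite IH /=; simpl_var_eq.
by rewrite IH /=; simpl_var_eq => -[h1 h2]; exists i.
Qed.

Opaque chain_above_f.

Lemma last_block_size_f_sat u nu c : fo_sat u nu (last_block_size_f c) <-> last_block_size u c.
Proof.
rewrite /last_block_size_f /=; split=> [[v [dv]] | [v [lv h1 h2]]].
  by rewrite !chain_above_f_sat last_limit_f_sat //= => -[h1 [h2 h3]]; exists v.
have dv : wdom u v by case: lv => /limit_pos_dom.
by exists v; split=> //; rewrite !chain_above_f_sat last_limit_f_sat.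
Qed.

Lemma nonempty_f_sat u nu : fo_sat u nu nonempty_f <-> exists i, wdom u i.
Proof. by split=> [[i [di _]] | [i di]]; [exists i | exists i; split=> // -[]]. Qed.

Lemma all_letters_f_sat u nu a : fo_sat u nu (all_letters_f a) <-> forall i, wdom u i -> wlab u i = a.
Proof. by rewrite fo_sat_all. Qed.

Fixpoint fo_rel (d : nat -> fo S) (p : fo S) : fo S :=
  match p with
  | FEx x q => FEx x (FAnd (d x) (fo_rel d q))
  | FNot q => FNot (fo_rel d q)
  | FAnd q r => FAnd (fo_rel d q) (fo_rel d r)
  | q => q
  end.

Lemma fo_rel_sat (d : nat -> fo S) u (D : nat -> Prop) :
  (forall nu x, wdom u (nu x) -> (fo_sat u nu (d x) <-> D (nu x))) ->
  forall p nu, fo_sat u nu (fo_rel d p) <-> fo_sat (restrict u D) nu p.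
Proof.
move=> hd; elim=> [x y|x y|s x||p IH|p IHp q IHq|x p IH] nu //=.
- by rewrite IH.
- by rewrite IHp IHq.
split=> [[i [di [h1 h2]]] | [i [[di Di] h]]]; exists i.
  by split; [split=> //; move: h1; rewrite hd /= eqxx | rewrite -IH].
by split=> //; split; [rewrite hd /= eqxx | rewrite IH].
Qed.

Lemma fo_rel_free (d : nat -> fo S) : (forall z x, fo_free z (d x) -> z = x) ->
  forall p z, fo_free z (fo_rel d p) -> fo_free z p.
Proof.
move=> hd; elim=> [x y|x y|s x||p IH|p IHp q IHq|x p IH] z //=.
- exact: IH.
- by move=> /orP[/IHp -> | /IHq ->]; rewrite ?orbT.
move=> /andP[h1 /orP[/hd e | /IH ->]]; last by rewrite h1.
by rewrite e eqxx in h1.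
Qed.

Lemma fo_rel_sentence (d : nat -> fo S) p : (forall z x, fo_free z (d x) -> z = x) ->
  fo_sentence p -> fo_sentence (fo_rel d p).
Proof. by move=> hd hp z; apply/negP => /(fo_rel_free hd) h; have := hp z; rewrite h. Qed.
End FOFormulas.

Section Definability.
Variable S : Type.
Implicit Types (u v : rword S) (p q : fo S) (L : seq (fo S)) (P Q : rword S -> Prop).

Definition fo_sentences L := forall p, List.In p L -> fo_sentence p.

Definition fo_agree L u v :=
  forall p, List.In p L -> (fo_sat u (fun _ => 0) p <-> fo_sat v (fun _ => 0) p).

Lemma fo_definable_ext P Q : (forall u, is_word u -> (P u <-> Q u)) ->
  fo_definable P -> fo_definable Q.
Proof. by move=> PQ [p [sp hp]]; exists p; split=> // u wu; rewrite -PQ // hp. Qed.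

Lemma fo_definable_sat p : fo_sentence p -> fo_definable (fun u => fo_sat u (fun _ => 0) p).
Proof. by move=> sp; exists p. Qed.

Lemma fo_definable_not P : fo_definable P -> fo_definable (fun u => ~ P u).
Proof. by move=> [p [sp hp]]; exists (FNot p); split=> // u wu /=; rewrite hp. Qed.

Lemma fo_definable_and P Q : fo_definable P -> fo_definable Q -> fo_definable (fun u => P u /\ Q u).
Proof.
move=> [p [sp hp]] [q [sq hq]]; exists (FAnd p q); split=> [z | u wu /=]; last by rewrite hp ?hq.
by rewrite /= (negbTE (sp z)) (negbTE (sq z)).
Qed.

Lemma fo_definable_or P Q : fo_definable P -> fo_definable Q -> fo_definable (fun u => P u \/ Q u).
Proof.
move=> dP dQ; apply: fo_definable_ext (fo_definable_not (fo_definable_and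
  (fo_definable_not dP) (fo_definable_not dQ))) => u _.
by split=> [h | [h|h] [nP nQ]]; [apply: NNPP => nPQ; apply: h; split=> ?; apply: nPQ; [left|right] | exact: nP | exact: nQ].
Qed.

Lemma fo_definable_of_agree L : fo_sentences L ->
  forall Q, (forall u v, is_word u -> is_word v -> fo_agree L u v -> Q u -> Q v) -> fo_definable Q.
Proof.
elim: L => [|p L IH] sL Q hQ.
  case: (classic (exists u, is_word u /\ Q u)) => [[u0 [w0 q0]] | nq].
    exists (fo_true S); split=> // u wu; split=> _; first exact: id.
    exact: (hQ u0 u w0 wu (fun q hq => match hq with end) q0).
  by exists FFalse; split=> // u wu; split=> // qu; apply: nq; exists u.
have sp : fo_sentence p by apply: sL; left.
have sL' : fo_sentences L by move=> q hq; apply: sL; right.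
pose Qp (b : Prop) u := exists v, [/\ is_word v, Q v, fo_sat v (fun _ => 0) p <-> b & fo_agree L u v].
have dQp b : fo_definable (Qp b).
  apply: IH => // u v wu wv huv [w [ww qw pw ag]]; exists w; split=> // q hq.
  by rewrite -(huv q hq) (ag q hq).
apply: fo_definable_ext (fo_definable_or
  (fo_definable_and (fo_definable_sat sp) (dQp True))
  (fo_definable_and (fo_definable_not (fo_definable_sat sp)) (dQp False))) => u wu.
split=> [[[up [v [wv qv pv ag]]] | [up [v [wv qv pv ag]]]] | qu].
- apply: hQ wv wu _ qv => q [<- | hq]; first by rewrite pv.
  by rewrite (ag q hq).
- apply: hQ wv wu _ qv => q [<- | hq]; first by rewrite pv; split=> // /up.
  by rewrite (ag q hq).
case: (classic (fo_sat u (fun _ => 0) p)) => up; [left | right]; split=> //; exists u; split=> //.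
Qed.

Definition fo_invariant T (F : rword S -> T) := exists L, fo_sentences L /\
  forall u v, is_word u -> is_word v -> fo_agree L u v -> F u = F v.

Lemma fo_definable_fibre T (F : rword S -> T) m : fo_invariant F -> fo_definable (fun u => F u = m).
Proof.
move=> [L [sL hL]]; apply: (fo_definable_of_agree sL) => u v wu wv ag <-.
by symmetry; apply: hL.
Qed.

Lemma fo_invariant_const T (x : T) : fo_invariant (fun _ => x).
Proof. by exists [::]; split=> // p []. Qed.

Lemma fo_invariant_prop p P : fo_sentence p ->
  (forall u, fo_sat u (fun _ => 0) p <-> P u) -> fo_invariant (fun u => classicb (P u)).
Proof.
move=> sp hp; exists [:: p]; split=> [q [<- | []] // | u v wu wv ag].
by apply: classicb_ext; rewrite -!hp; apply: ag; left.
Qed.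

Lemma fo_invariant_pair T1 T2 (F : rword S -> T1) (G : rword S -> T2) :
  fo_invariant F -> fo_invariant G -> fo_invariant (fun u => (F u, G u)).
Proof.
move=> [L1 [s1 h1]] [L2 [s2 h2]]; exists (L1 ++ L2); split.
  by move=> q hq; case: (List.in_app_or _ _ _ hq) => ?; [apply: s1 | apply: s2].
move=> u v wu wv ag; rewrite (h1 u v) ?(h2 u v) // => q hq; apply: ag; apply: List.in_or_app; auto.
Qed.

Lemma fo_invariant_comp T1 T2 (f : T1 -> T2) (F : rword S -> T1) :
  fo_invariant F -> fo_invariant (fun u => f (F u)).
Proof. by move=> [L [sL hL]]; exists L; split=> // u v wu wv ag; rewrite (hL u v). Qed.

Lemma fo_invariant_restrict T (F : rword S -> T) (d : nat -> fo S) (D : rword S -> nat -> Prop) :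
  (forall z x, fo_free z (d x) -> z = x) ->
  (forall u nu x, wdom u (nu x) -> (fo_sat u nu (d x) <-> D u (nu x))) ->
  fo_invariant F -> fo_invariant (fun u => F (restrict u (D u))).
Proof.
move=> fd hd [L [sL hL]]; exists (map (fo_rel d) L); split.
  by move=> q /List.in_map_iff [p [<- hp]]; apply: fo_rel_sentence => //; apply: sL.
move=> u v wu wv ag; apply: hL; try solve_is_word.
move=> p hp; rewrite -!(fo_rel_sat (hd _)); apply: ag.
by apply/List.in_map_iff; exists p.
Qed.
End Definability.

Section RhoInvariant.
Variables (M : finType) (pi : rword M -> M) (sharp : M -> M).

Lemma last_block_approx_invariant b : fo_invariant (fun u => last_block_approx pi sharp u b).
Proof.
rewrite /last_block_approx; elim: (iota 0 #|M|`!) => [|c s IH] /=; first exact: fo_invariant_const.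
have Ic := fo_invariant_prop (last_block_size_f_sentence M c) (fun u => last_block_size_f_sat u (fun _ => 0) c).
exact: (fo_invariant_comp (fun x => if x.1 then om_pow pi b c.+1 else x.2) (fo_invariant_pair Ic IH)).
Qed.

Lemma rho_invariant n b : fo_invariant (rho pi sharp n b).
Proof.
have Ine := fo_invariant_prop (nonempty_f_sentence M) (fun u => nonempty_f_sat u (fun _ => 0)).
elim: n b => [|n IH] b.
  exact: (fo_invariant_comp (fun ne : bool => if ne then b else om_one pi b) Ine).
have Ihl := fo_invariant_prop (has_last_f_sentence M) (fun u => has_last_f_sat u (fun _ => 0)).
have Ir := fo_invariant_restrict (@omega_start_f_free M)
  (fun u nu x dx => omega_start_f_sat dx) (IH (om_omega pi b)).
pose f x := if x.1 then (if x.2.1 then om_mul pi x.2.2.1 x.2.2.2 else x.2.2.1) else om_one pi b.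
exact: (fo_invariant_comp f (fo_invariant_pair Ine (fo_invariant_pair Ihl
  (fo_invariant_pair Ir (last_block_approx_invariant b))))).
Qed.
End RhoInvariant.

Lemma fo_definable_a_ord (M : Type) (a : M) : fo_definable (a_ord a).
Proof.
exists (all_letters_f a); split; first exact: all_letters_f_sentence.
by move=> u wu; rewrite all_letters_f_sat; split=> [[] | ].
Qed.

Theorem lemma5p11 (M : finType) (pi : rword M -> M) (le : rel M) (sharp : M -> M) :
  ordinal_monoid pi -> ordered_om pi le -> merge_axioms pi le sharp ->
  forall a : M, exists rho : rword M -> M, fo_approximant pi le (a_ord a) rho.
Proof.
move=> Hom Hord Hmerge a; exists (rho pi sharp #|M| a); split.
- exact: fo_definable_a_ord.
- move=> m; apply: fo_definable_and; first exact: fo_definable_a_ord.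
  exact: fo_definable_fibre (rho_invariant pi sharp #|M| a).
- move=> u [wu lab]; rewrite (pi_ext Hom (v := const_word u a)) //.
  exact: (pi_const_le_rho Hom Hord Hmerge (omega_iter_stable Hom a) wu).
Qed.
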